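(* For the three calculi on $\mathbb F_2[e,x]$ given by the algebras (A) $x\circ x=0$, (B) $x\circ x=x$, (C) $x\circ x=e+x$ (basis $e,x$, $e$ the unit), the quantum metrics are exactly: (A) $g_{A.I}=\mathrm de\otimes\mathrm dx+\mathrm dx\otimes\mathrm de$ and $g_{A.II}=\mathrm de\otimes\mathrm dx+\mathrm dx\otimes\mathrm de+\mathrm dx\otimes\mathrm dx$; (B) $g_B=\mathrm de\otimes\mathrm de+\mathrm de\otimes\mathrm dx+\mathrm dx\otimes\mathrm de$; (C) $g_{C.I}=\mathrm de\otimes\mathrm dx+\mathrm dx\otimes\mathrm de+\mathrm dx\otimes\mathrm dx$, $g_{C.II}=\mathrm de\otimes\mathrm de+\mathrm de\otimes\mathrm dx+\mathrm dx\otimes\mathrm de$, $g_{C.III}=\mathrm de\otimes\mathrm de+\mathrm dx\otimes\mathrm dx$. Moreover, the quantum Levi-Civita connections with constant coefficients, besides the zero connection $\nabla\mathrm de=\nabla\mathrm dx=0$ (with $\sigma$ the flip on generators), are exactly: for $g_{A.I}$: (1) $\nabla\mathrm de=\mathrm dx\otimes\mathrm dx,\ \nabla\mathrm dx=0$; (2) $\nabla\mathrm de=\mathrm dx\otimes\mathrm de+\mathrm de\otimes\mathrm dx,\ \nabla\mathrm dx=\mathrm dx\otimes\mathrm dx$; (3) $\nabla\mathrm de=\mathrm dx\otimes\mathrm de+\mathrm de\otimes\mathrm dx+\mathrm dx\otimes\mathrm dx,\ \nabla\mathrm dx=\mathrm dx\otimes\mathrm dx$; (4) $\nabla\mathrm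 de=0,\ \nabla\mathrm dx=\mathrm de\otimes\mathrm de$; (5) $\nabla\mathrm de=\mathrm de\otimes\mathrm dx+\mathrm dx\otimes\mathrm de,\ \nabla\mathrm dx=\mathrm de\otimes\mathrm de+\mathrm dx\otimes\mathrm dx$; for $g_{A.II}$: the connections (1), (2), (3) above; for $g_B$: $\nabla\mathrm de=0,\ \nabla\mathrm dx=\mathrm de\otimes\mathrm de$; for $g_{C.I}$: $\nabla\mathrm de=\mathrm de\otimes\mathrm dx+\mathrm dx\otimes\mathrm de+\mathrm dx\otimes\mathrm dx,\ \nabla\mathrm dx=\mathrm dx\otimes\mathrm dx$; for $g_{C.II}$: $\nabla\mathrm de=0,\ \nabla\mathrm dx=\mathrm de\otimes\mathrm de$; for $g_{C.III}$: $\nabla\mathrm de=\mathrm de\otimes\mathrm de+\mathrm dx\otimes\mathrm dx,\ \nabla\mathrm dx=\mathrm de\otimes\mathrm dx+\mathrm dx\otimes\mathrm de$. In all cases the map $\alpha$ in the decomposition $\nabla\omega=\theta\otimes\omega-\sigma(\omega\otimes\theta)+\alpha\omega$, $\theta=\mathrm de$, is zero.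
   Context: Standing setup. Work over $\mathbb F_2$. Let $(V,\circ)$ be a commutative associative algebra over $\mathbb F_2$ with basis $x^1,\dots,x^n$ and structure constants $x^\mu\circ x^\nu=\sum_\rho V^{\mu\nu}{}_\rho x^\rho$. Let $A=\mathbb F_2[x^1,\dots,x^n]$ be the polynomial algebra on the same symbols. The associated differential calculus is the $A$-bimodule $\Omega^1$ which is free as a left $A$-module on $\mathrm dx^1,\dots,\mathrm dx^n$, with right action determined by $\mathrm dx^\mu\, x^\nu=x^\nu\,\mathrm dx^\mu+\sum_\rho V^{\mu\nu}{}_\rho\,\mathrm dx^\rho$, together with the unique map $\mathrm d:A\to\Omega^1$ satisfying the Leibniz rule $\mathrm d(ab)=(\mathrm da)b+a\,\mathrm db$, $\mathrm d(x^\mu)=\mathrm dx^\mu$, $\mathrm d1=0$. The bimodule $\Omega^1\otimes_A\Omega^1$ is free as a left module on $\mathrm dx^\mu\otimes\mathrm dx^\nu$. $\Omega^2$ is the quotient of $\Omega^1\otimes_A\Omega^1$ by the sub-bimodule generated by $\mathrm dx^\mu\otimes\mathrm dx^\mu$ and $\mathrm dx^\mu\otimes\mathrm dx^\nu+\mathrm dx^\nu\otimes \mathrm dx^\mu$; the quotient map is denoted $\wedge$, and $\mathrm d$ is extended to $\Omega^1$ by $\mathrm d(a\,\mathrm dx^\mu)=\mathrm da\wedge\mathrm dx^\mu$. A quantum metric is $g=\sum_{\mu,\nu}g_{\mu\nu}\mathrm dx^\mu\otimes\mathrm dx^\nu$ with constants $g_{\mu\nu}\in\mathbb F_2$, $g_{\mu\nu}=g_{\nu\mu}$,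 the matrix $(g_{\mu\nu})$ invertible, and $g$ central: $x^\rho g=g x^\rho$ for all $\rho$. A bimodule connection is a pair $(\nabla,\sigma)$ with $\nabla:\Omega^1\to\Omega^1\otimes_A\Omega^1$ additive, $\nabla(a\omega)=a\nabla\omega+\mathrm da\otimes\omega$, and $\sigma:\Omega^1\otimes_A\Omega^1\to\Omega^1\otimes_A\Omega^1$ a bimodule map with $\nabla(\omega a)=(\nabla\omega)a+\sigma(\omega\otimes\mathrm da)$. It has constant coefficients if $\nabla\mathrm dx^\mu=\sum\Gamma^\mu{}_{\nu\rho}\mathrm dx^\nu\otimes\mathrm dx^\rho$ with $\Gamma^\mu{}_{\nu\rho}\in\mathbb F_2$. A quantum Levi-Civita connection (QLC) for $g$ is a bimodule connection with $\sigma$ invertible, torsion free ($\wedge\nabla=\mathrm d$ on $\Omega^1$) and metric compatible ($(\nabla\otimes\mathrm{id})g+(\sigma\otimes\mathrm{id})(\mathrm{id}\otimes\nabla)g=0$). Its curvature is $R_\nabla=(\mathrm d\otimes\mathrm{id}-(\wedge\otimes\mathrm{id})(\mathrm{id}\otimes\nabla))\nabla:\Omega^1\to\Omega^2\otimes_A\Omega^1$. Here the basis is $x^1=e$, $x^2=x$. *)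

From HB Require Import structures.
From mathcomp Require Import all_boot all_order all_algebra.
Set Implicit Arguments. Unset Strict Implicit. Unset Printing Implicit Defensive.
Import GRing.Theory.
Local Open Scope ring_scope.

(* The polynomial algebra A = F_2[e,x], realised as F_2[e][x]:
   the inner variable is e, the outer variable is x. *)
Notation A := {poly {poly 'F_2}}.

Definition cA (c : 'F_2) : A := c%:P%:P.
Definition evar : A := ('X : {poly 'F_2})%:P.
Definition xvar : A := 'X.

Definition i0 : 'I_2 := ord0.
Definition i1 : 'I_2 := ord_max.
Definition gen (mu : 'I_2) : A := if val mu == 0%N then evar else xvar.

(* structure constants  x^mu o x^nu = sum_rho V mu nu rho x^rho *)
Definition struct := 'I_2 -> 'I_2 -> 'I_2 -> 'F_2.

(* unital algebra with unit e and x o x = c0 e + c1 x *)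
Definition unital_alg (c0 c1 : 'F_2) : struct := fun mu nu rho =>
  if val mu == 0%N then (nu == rho)%:R
  else if val nu == 0%N then (mu == rho)%:R
  else if val rho == 0%N then c0 else c1.

Definition VA : struct := unital_alg 0 0.
Definition VB : struct := unital_alg 0 1.
Definition VC : struct := unital_alg 1 1.

(* Omega^1 : free left A-module on dx^0 = de, dx^1 = dx; elements are row
   vectors of left coefficients.  Omega^1 (x)_A Omega^1 : free left module
   on dx^mu (x) dx^nu; elements are 2x2 matrices T with T mu nu the left
   coefficient of dx^mu (x) dx^nu. *)
Definition dx (mu : 'I_2) : 'rV[A]_2 := delta_mx 0 mu.

(* matrix of right multiplication by the generator x^nu on Omega^1:
   dx^mu x^nu = x^nu dx^mu + sum_rho V mu nu rho dx^rho *)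
Definition Nmx (V : struct) (nu : 'I_2) : 'M[A]_2 :=
  \matrix_(mu, rho) cA (V mu nu rho).
Definition Rgen (V : struct) (nu : 'I_2) : 'M[A]_2 := (gen nu)%:M + Nmx V nu.

(* matrix of right multiplication by a general a = sum a_ij e^j x^i *)
Definition Ract (V : struct) (a : A) : 'M[A]_2 :=
  \sum_(i < size a) \sum_(j < size a`_i)
     ((cA (a`_i)`_j)%:M *m (Rgen V i0 ^+ j) *m (Rgen V i1 ^+ i)).

Definition rmul (V : struct) (w : 'rV[A]_2) (a : A) : 'rV[A]_2 := w *m Ract V a.

Definition tens (V : struct) (w eta : 'rV[A]_2) : 'M[A]_2 :=
  \matrix_(k, l) (rmul V w (eta 0 l)) 0 k.

(* right action of A on Omega^1 (x)_A Omega^1 : (w (x) eta) a = w (x) (eta a) *)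
Definition rtens (V : struct) (T : 'M[A]_2) (a : A) : 'M[A]_2 :=
  \sum_(mu < 2) \sum_(nu < 2) (T mu nu *: tens V (dx mu) (rmul V (dx nu) a)).

(* exterior derivative d : A -> Omega^1, the unique additive map with
   d(x^mu) = dx^mu satisfying Leibniz, written out on monomials e^j x^i:
   d(e^j x^i) = sum_{k<j} e^k (de . e^(j-1-k) x^i) + sum_{k<i} e^j x^k (dx . x^(i-1-k)) *)
Definition dA (V : struct) (a : A) : 'rV[A]_2 :=
  \sum_(i < size a) \sum_(j < size a`_i)
     (cA (a`_i)`_j *:
       (\sum_(k < j) (evar ^+ k *: rmul V (dx i0) (evar ^+ (j - k.+1) * xvar ^+ i))
      + \sum_(k < i) ((evar ^+ j * xvar ^+ k) *: rmul V (dx i1) (xvar ^+ (i - k.+1))))).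

(* Omega^2 : quotient of Omega^1 (x)_A Omega^1 by the sub-bimodule generated by
   dx^mu (x) dx^mu and dx^mu (x) dx^nu + dx^nu (x) dx^mu, which (char 2) is the
   set of symmetric tensors; the quotient is free of rank one on de /\ dx, and
   we identify Omega^2 with A via the coefficient of de /\ dx. *)
Definition wedge (T : 'M[A]_2) : A := T i0 i1 + T i1 i0.

Definition dd (V : struct) (w : 'rV[A]_2) : A :=
  \sum_(mu < 2) wedge (tens V (dA V (w 0 mu)) (dx mu)).

Definition liftmx (g : 'M['F_2]_2) : 'M[A]_2 := map_mx cA g.

Definition is_qmetric (V : struct) (g : 'M['F_2]_2) : Prop :=
  [/\ g^T = g, g \in unitmx &
      forall rho : 'I_2, gen rho *: liftmx g = rtens V (liftmx g) (gen rho)].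

Definition is_bimod_map (V : struct) (sigma : 'M[A]_2 -> 'M[A]_2) : Prop :=
  [/\ forall T U, sigma (T + U) = sigma T + sigma U,
      forall (a : A) T, sigma (a *: T) = a *: sigma T &
      forall T (a : A), sigma (rtens V T a) = rtens V (sigma T) a].

Definition bimod_conn (V : struct) (nabla : 'rV[A]_2 -> 'M[A]_2)
    (sigma : 'M[A]_2 -> 'M[A]_2) : Prop :=
  [/\ forall w eta, nabla (w + eta) = nabla w + nabla eta,
      forall (a : A) w, nabla (a *: w) = a *: nabla w + tens V (dA V a) w,
      forall w (a : A), nabla (rmul V w a) = rtens V (nabla w) a + sigma (tens V w (dA V a)) &
      is_bimod_map V sigma].


Definition torsion_free (V : struct) (nabla : 'rV[A]_2 -> 'M[A]_2) : Prop :=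
  forall w, wedge (nabla w) = dd V w.

(* Omega^1 (x)_A Omega^1 (x)_A Omega^1 : functions b |-> slice, where the slice
   b is the 2-tensor multiplying (_ (x) dx^b). *)
(* T (x) dx^nu *)
Definition tens3r (T : 'M[A]_2) (nu : 'I_2) : 'I_2 -> 'M[A]_2 :=
  fun b => if b == nu then T else 0.
(* w (x) T *)
Definition tens3l (V : struct) (w : 'rV[A]_2) (T : 'M[A]_2) : 'I_2 -> 'M[A]_2 :=
  fun b => \matrix_(p, a) (rmul V w (T a b)) 0 p.

(* (nabla (x) id) g + (sigma (x) id)(id (x) nabla) g = 0 *)
Definition metric_compatible (V : struct) (g : 'M['F_2]_2)
    (nabla : 'rV[A]_2 -> 'M[A]_2) (sigma : 'M[A]_2 -> 'M[A]_2) : Prop :=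
  forall b : 'I_2,
    \sum_(mu < 2) \sum_(nu < 2)
       (cA (g mu nu) *: (tens3r (nabla (dx mu)) nu b
                         + sigma (tens3l V (dx mu) (nabla (dx nu)) b))) = 0.

Definition is_QLC (V : struct) (g : 'M['F_2]_2)
    (nabla : 'rV[A]_2 -> 'M[A]_2) (sigma : 'M[A]_2 -> 'M[A]_2) : Prop :=
  [/\ bimod_conn V nabla sigma, bijective sigma, torsion_free V nabla &
      metric_compatible V g nabla sigma].

(* constant Christoffel symbols: Gam = (matrix of nabla de, matrix of nabla dx),
   entry (nu, rho) = coefficient of dx^nu (x) dx^rho *)
Definition Gam (G : 'M['F_2]_2 * 'M['F_2]_2) (mu : 'I_2) : 'M['F_2]_2 :=
  if val mu == 0%N then G.1 else G.2.

Definition const_coeff (nabla : 'rV[A]_2 -> 'M[A]_2)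
    (G : 'M['F_2]_2 * 'M['F_2]_2) : Prop :=
  forall mu, nabla (dx mu) = liftmx (Gam G mu).

(* 2x2 matrix over F_2 from coefficients of de(x)de, de(x)dx, dx(x)de, dx(x)dx *)
Definition mx2 (a b c d : 'F_2) : 'M['F_2]_2 :=
  \matrix_(i, j) if val i == 0%N then (if val j == 0%N then a else b)
                 else (if val j == 0%N then c else d).

Definition theta : 'rV[A]_2 := dx i0.

Definition qlc_classification (V : struct) (g : 'M['F_2]_2)
    (L : seq ('M['F_2]_2 * 'M['F_2]_2)) : Prop :=
  [/\ forall G, (exists nabla sigma, is_QLC V g nabla sigma /\ const_coeff nabla G)
                <-> G \in L,
      forall G nabla sigma, is_QLC V g nabla sigma -> const_coeff nabla G ->
        forall w, nabla w - (tens V theta w - sigma (tens V w theta)) = 0 &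
      forall nabla sigma, is_QLC V g nabla sigma -> const_coeff nabla (0, 0) ->
        forall mu nu, sigma (tens V (dx mu) (dx nu)) = tens V (dx nu) (dx mu)].

From HB Require Import structures.
From mathcomp Require Import all_boot all_order all_algebra.
From mathcomp Require Import ring.
Set Implicit Arguments. Unset Strict Implicit. Unset Printing Implicit Defensive.
Import GRing.Theory.
Local Open Scope ring_scope.

(* In characteristic 2 the calculus is inner: [d a = theta a + a theta] with
   [theta = de].  Hence a bimodule connection with constant coefficients has the
   form [nabla w = theta (x) w + sigma (w (x) theta)] (so alpha = 0), and the right
   Leibniz rule for [dx^a . x^b] expresses [sigma (dx^a (x) dx^b)] through the
   Christoffel symbols.  Torsion freeness then says that the Christoffel matrices
   are symmetric and metric compatibility becomes a linear system over F_2;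
   conversely every symmetric solution whose [sigma] is an involution commuting
   with the right action of [x] defines a QLC.  Metrics, Christoffel symbols and
   [sigma] are thus encoded by 2x2 matrices over F_2, and the classification is a
   finite computation. *)

Lemma ord2P (i : 'I_2) : i = i0 \/ i = i1.
Proof. by case: i => [[|[|n]] Hn]; [left|right|by []]; exact: val_inj. Qed.

Lemma F2P (z : 'F_2) : z = 0 \/ z = 1.
Proof. by case: z => [[|[|n]] Hn]; [left|right|by []]; exact: val_inj. Qed.

Lemma sum_mulrn_eq (M : nmodType) (I : finType) (F : I -> M) (l : I) :
  \sum_i F i *+ (i == l) = F l.
Proof. by under eq_bigr do rewrite mulrb; rewrite -big_mkcond big_pred1_eq. Qed.

Lemma sum_scalar_mxZ (R : nzRingType) (M : lmodType R) n (c : R) (a : 'I_n)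
    (F : 'I_n -> M) :
  \sum_i (c%:M : 'M[R]_n) a i *: F i = c *: F a.
Proof.
by under eq_bigr do rewrite mxE -scalerMnl eq_sym; rewrite sum_mulrn_eq.
Qed.

Lemma sum_delta_mxZ (R : nzRingType) (M : lmodType R) m n (F : 'I_m -> 'I_n -> M) a b :
  \sum_i \sum_j delta_mx a b i j *: F i j = F a b.
Proof.
under eq_bigr do under eq_bigr do rewrite mxE scaler_nat -mulnb mulrnA.
by under eq_bigr do rewrite sum_mulrn_eq; rewrite sum_mulrn_eq.
Qed.

Lemma additive0 (X Y : zmodType) (f : X -> Y) :
  (forall x y, f (x + y) = f x + f y) -> f 0 = 0.
Proof. by move=> fD; apply: (addIr (f 0)); rewrite -fD !add0r. Qed.

Lemma additive_sum (X Y : zmodType) (f : X -> Y) :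
  (forall x y, f (x + y) = f x + f y) ->
  forall I (r : seq I) (P : pred I) (F : I -> X),
  f (\sum_(i <- r | P i) F i) = \sum_(i <- r | P i) f (F i).
Proof. by move=> fD; apply: big_morph (additive0 fD). Qed.

Lemma linear_mx_decomp (R : nzRingType) (M : lmodType R) m n (f : 'M[R]_(m, n) -> M) :
  (forall T U, f (T + U) = f T + f U) -> (forall c T, f (c *: T) = c *: f T) ->
  forall T, f T = \sum_i \sum_j T i j *: f (delta_mx i j).
Proof.
move=> fD fZ T; rewrite {1}(matrix_sum_delta T) (additive_sum fD).
apply: eq_bigr => i _; rewrite (additive_sum fD).
by apply: eq_bigr => j _; rewrite fZ.
Qed.

Lemma linear_mx_ext (R : nzRingType) (M : lmodType R) m n (f g : 'M[R]_(m, n) -> M) :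
  (forall T U, f (T + U) = f T + f U) -> (forall c T, f (c *: T) = c *: f T) ->
  (forall T U, g (T + U) = g T + g U) -> (forall c T, g (c *: T) = c *: g T) ->
  (forall i j, f (delta_mx i j) = g (delta_mx i j)) -> f =1 g.
Proof.
move=> fD fZ gD gZ fg T; rewrite (linear_mx_decomp fD fZ) (linear_mx_decomp gD gZ).
by apply: eq_bigr => i _; apply: eq_bigr => j _; rewrite fg.
Qed.

Section Char2Matrix.
Variables (R : nzRingType) (pcharR2 : 2 \in [pchar R]).

Lemma addmx_pchar2 m n (M : 'M[R]_(m, n)) : M + M = 0.
Proof. by apply/matrixP => i j; rewrite !mxE addrr_pchar2. Qed.

Lemma addmx_pchar2K m n (M N : 'M[R]_(m, n)) : M + (M + N) = N.
Proof. by rewrite addrA addmx_pchar2 add0r. Qed.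

Lemma oppmx_pchar2 m n (M : 'M[R]_(m, n)) : - M = M.
Proof. by apply/matrixP => i j; rewrite !mxE oppr_pchar2. Qed.

End Char2Matrix.

Lemma pchar2_F2 : 2 \in [pchar 'F_2].
Proof. exact: pchar_Fp. Qed.

Lemma F2_addr_eq0 (x y : 'F_2) : (x + y == 0) = (x == y).
Proof. by rewrite addr_eq0 oppr_pchar2 // pchar2_F2. Qed.

Lemma pchar2_A : 2 \in [pchar A].
Proof. by do 2 apply: (rmorph_pchar polyC); exact: pchar2_F2. Qed.

Lemma cA_is_nat (b : bool) : cA b%:R = b%:R.
Proof. by case: b; rewrite /cA ?polyC1 ?polyC0. Qed.

Lemma cA_inj : injective cA.
Proof. by move=> a b /polyC_inj /polyC_inj. Qed.

Lemma cAD a b : cA (a + b) = cA a + cA b.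
Proof. by rewrite /cA !polyCD. Qed.

Lemma cA0 : cA 0 = 0.
Proof. by rewrite /cA !polyC0. Qed.

Definition cA_rmorph := @polyC {poly 'F_2} \o @polyC 'F_2.

Lemma liftmx_map (M : 'M['F_2]_2) : liftmx M = map_mx cA_rmorph M.
Proof. by []. Qed.

Lemma liftmxE M i j : liftmx M i j = cA (M i j).
Proof. by rewrite mxE. Qed.

Lemma liftmxD M N : liftmx (M + N) = liftmx M + liftmx N.
Proof. by rewrite !liftmx_map map_mxD. Qed.

Lemma liftmxM M N : liftmx (M *m N) = liftmx M *m liftmx N.
Proof. by rewrite !liftmx_map map_mxM. Qed.

Lemma liftmx_tr M : liftmx M^T = (liftmx M)^T.
Proof. by rewrite !liftmx_map map_trmx. Qed.

Lemma liftmxZ c M : liftmx (c *: M) = cA c *: liftmx M.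
Proof. by rewrite !liftmx_map map_mxZ. Qed.

Lemma liftmx_delta i j : liftmx (delta_mx i j) = delta_mx i j.
Proof. by rewrite liftmx_map map_delta_mx. Qed.

Lemma liftmx0 : liftmx 0 = 0.
Proof. by rewrite liftmx_map map_mx0. Qed.

Lemma liftmx_sum I (r : seq I) (P : pred I) (F : I -> 'M['F_2]_2) :
  liftmx (\sum_(i <- r | P i) F i) = \sum_(i <- r | P i) liftmx (F i).
Proof. by rewrite liftmx_map raddf_sum. Qed.

Lemma liftmx_inj : injective liftmx.
Proof. by move=> M N; rewrite !liftmx_map; apply: map_mx_inj. Qed.

Lemma row_sum_dx (w : 'rV[A]_2) : w = \sum_mu w 0 mu *: dx mu.
Proof. exact: row_sum_delta. Qed.

Lemma wedgeD T U : wedge (T + U) = wedge T + wedge U.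
Proof. by rewrite /wedge !mxE addrACA. Qed.

Lemma wedgeZ (c : A) T : wedge (c *: T) = c * wedge T.
Proof. by rewrite /wedge !mxE mulrDr. Qed.

Lemma wedge_lift M : wedge (liftmx M) = cA (M i0 i1 + M i1 i0).
Proof. by rewrite /wedge !mxE cAD. Qed.

Definition twist (V : struct) rho (T : 'M[A]_2) : 'M[A]_2 :=
  (Nmx V rho)^T *m T + T *m Nmx V rho.

Section Calculus.
Variables c0 c1 : 'F_2.
Local Notation V := (unital_alg c0 c1).

Lemma Nmx_unit : Nmx V i0 = 1%:M.
Proof.
apply/matrixP => mu rho; rewrite !mxE /unital_alg.
by case: (ord2P mu) => ->; case: (ord2P rho) => -> /=; rewrite ?cA_is_nat.
Qed.

Lemma Rgen_unit : Rgen V i0 = (evar + 1)%:M.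
Proof. by rewrite /Rgen Nmx_unit raddfD. Qed.

Definition shift_unit : {poly 'F_2} -> A := @polyC _ \o comp_poly ('X + 1).

Lemma Ract_horner (a : A) : Ract V a = horner_mx (Rgen V i1) (map_poly shift_unit a).
Proof.
have Ract_coef (p : {poly 'F_2}) :
    \sum_(j < size p) ((cA p`_j)%:M *m (Rgen V i0 ^+ j)) = (shift_unit p)%:M.
  rewrite Rgen_unit /shift_unit /= comp_polyE rmorph_sum raddf_sum /=.
  apply: eq_bigr => j _; rewrite -rmorphXn /= -scalar_mxM; congr (_%:M).
  by rewrite /cA -mul_polyC rmorphM /= rmorphXn /= rmorphD /= rmorph1.
rewrite /Ract /horner_mx /horner_morph (@horner_coef_wide _ (size a)); last first.
  by rewrite /map_poly (leq_trans (size_poly _ _)) // /map_poly size_poly.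
apply: eq_bigr => i _.
by rewrite -mulmx_suml Ract_coef coef_map /= coef_map.
Qed.

Lemma RactD a b : Ract V (a + b) = Ract V a + Ract V b.
Proof. by rewrite !Ract_horner !raddfD. Qed.

Lemma RactM a b : Ract V (a * b) = Ract V a * Ract V b.
Proof. by rewrite !Ract_horner !rmorphM. Qed.

Lemma RactX a n : Ract V (a ^+ n) = Ract V a ^+ n.
Proof. by rewrite !Ract_horner !rmorphXn. Qed.

Lemma Ract_sum I (r : seq I) (P : pred I) (F : I -> A) :
  Ract V (\sum_(i <- r | P i) F i) = \sum_(i <- r | P i) Ract V (F i).
Proof. by rewrite Ract_horner !raddf_sum; apply: eq_bigr => i _; rewrite Ract_horner. Qed.

Lemma RactC c : Ract V (cA c) = (cA c)%:M.
Proof. by rewrite Ract_horner /cA map_polyC horner_mx_C /shift_unit /= comp_polyC. Qed.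

Lemma Ract0 : Ract V 0 = 0.
Proof. by rewrite Ract_horner !raddf0. Qed.

Lemma Ract_evar : Ract V evar = (evar + 1)%:M.
Proof.
rewrite Ract_horner /evar map_polyC horner_mx_C /shift_unit /= comp_polyX.
by rewrite rmorphD /= rmorph1.
Qed.

Lemma Ract_xvar : Ract V xvar = Rgen V i1.
Proof. by rewrite Ract_horner /xvar map_polyX horner_mx_X. Qed.

Lemma Ract_gen rho : Ract V (gen rho) = Rgen V rho.
Proof. by case: (ord2P rho) => -> /=; rewrite ?Ract_evar ?Ract_xvar ?Rgen_unit. Qed.

Lemma Ract_Rgen rho nu l :
  Ract V (Rgen V rho nu l) = Rgen V rho *+ (nu == l) + (cA (V nu rho l))%:M.
Proof.
rewrite /Rgen !mxE RactD RactC.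
by case: (nu == l); rewrite ?mulr1n ?mulr0n ?Ract_gen ?Ract0.
Qed.

Lemma rmul_dx mu a : rmul V (dx mu) a = row mu (Ract V a).
Proof. by rewrite /rmul rowE. Qed.

Lemma tensE w eta k l : tens V w eta k l = \sum_j w 0 j * Ract V (eta 0 l) j k.
Proof. by rewrite /tens /rmul !mxE. Qed.

Lemma tensDl w1 w2 eta : tens V (w1 + w2) eta = tens V w1 eta + tens V w2 eta.
Proof.
apply/matrixP => k l; rewrite [RHS]mxE !tensE -big_split.
by apply: eq_bigr => j _; rewrite mxE mulrDl.
Qed.

Lemma tensDr w eta1 eta2 : tens V w (eta1 + eta2) = tens V w eta1 + tens V w eta2.
Proof.
apply/matrixP => k l; rewrite [RHS]mxE !tensE -big_split.
by apply: eq_bigr => j _; rewrite mxE RactD mxE mulrDr.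
Qed.

Lemma tensZl (a : A) w eta : tens V (a *: w) eta = a *: tens V w eta.
Proof.
apply/matrixP => k l; rewrite [RHS]mxE !tensE mulr_sumr.
by apply: eq_bigr => j _; rewrite mxE mulrA.
Qed.

Lemma tens_balanced (a : A) w eta : tens V (rmul V w a) eta = tens V w (a *: eta).
Proof.
apply/matrixP => k l; rewrite !tensE [(a *: eta) 0 l]mxE RactM -mulmxE /rmul.
under [in RHS]eq_bigr do rewrite mxE mulr_sumr.
under [in LHS]eq_bigr do rewrite mxE mulr_suml.
rewrite exchange_big; apply: eq_bigr => i _; apply: eq_bigr => j _.
by rewrite mulrA.
Qed.

Lemma tens_dxr w nu : tens V w (dx nu) = \matrix_(k, l) (w 0 k *+ (l == nu)).
Proof.
apply/matrixP => k l; rewrite tensE !mxE eqxx /= -cA_is_nat RactC cA_is_nat.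
under eq_bigr do rewrite mxE mulrnAr.
by rewrite sum_mulrn_eq mulr_natr.
Qed.

Lemma tens_dx mu nu : tens V (dx mu) (dx nu) = delta_mx mu nu.
Proof.
by apply/matrixP => k l; rewrite tens_dxr !mxE eqxx -mulrnA mulnb eq_sym.
Qed.

Lemma dx_sum mu (F : 'I_2 -> A) : \sum_j dx mu 0 j * F j = F mu.
Proof.
by under eq_bigr do rewrite mxE eqxx andTb mulr_natl; rewrite sum_mulrn_eq.
Qed.

Lemma rtensE T a k l :
  rtens V T a k l = \sum_mu \sum_nu T mu nu * Ract V (Ract V a nu l) mu k.
Proof.
rewrite /rtens summxE; apply: eq_bigr => mu _; rewrite summxE.
by apply: eq_bigr => nu _; rewrite mxE tensE rmul_dx mxE dx_sum.
Qed.

Lemma rtensDl T U a : rtens V (T + U) a = rtens V T a + rtens V U a.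
Proof.
apply/matrixP => k l; rewrite [RHS]mxE !rtensE -big_split.
apply: eq_bigr => mu _; rewrite -big_split.
by apply: eq_bigr => nu _; rewrite mxE mulrDl.
Qed.

Lemma rtensZl (c : A) T a : rtens V (c *: T) a = c *: rtens V T a.
Proof.
apply/matrixP => k l; rewrite [RHS]mxE !rtensE mulr_sumr.
apply: eq_bigr => mu _; rewrite mulr_sumr.
by apply: eq_bigr => nu _; rewrite mxE mulrA.
Qed.

Lemma rtensDr T a b : rtens V T (a + b) = rtens V T a + rtens V T b.
Proof.
apply/matrixP => k l; rewrite [RHS]mxE !rtensE -big_split.
apply: eq_bigr => mu _; rewrite -big_split.
by apply: eq_bigr => nu _; rewrite RactD !mxE RactD mxE mulrDr.
Qed.

Lemma rtens_tens w eta a : rtens V (tens V w eta) a = tens V w (rmul V eta a).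
Proof.
apply/matrixP => k l; rewrite rtensE tensE /rmul [(eta *m _) 0 l]mxE Ract_sum.
under [in RHS]eq_bigr do rewrite summxE.
under [in RHS]eq_bigr do under eq_bigr do rewrite RactM -mulmxE mxE.
rewrite !big_ord_recl !big_ord0 /= !tensE !big_ord_recl !big_ord0 /=; ring.
Qed.

Lemma rtens_gen T rho : rtens V T (gen rho) = (Rgen V rho)^T *m T + T *m Nmx V rho.
Proof.
apply/matrixP => k l; rewrite rtensE Ract_gen !mxE.
under eq_bigr do under eq_bigr do rewrite Ract_Rgen !mxE mulmxnE mulrDr !mulrnAr.
under eq_bigr do rewrite big_split /= sum_mulrn_eq sumrMnl.
rewrite big_split /= sum_mulrn_eq; congr (_ + _).
  by apply: eq_bigr => mu _; rewrite !mxE mulrC.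
by apply: eq_bigr => nu _; rewrite !mxE.
Qed.

Lemma rtensC T c : rtens V T (cA c) = cA c *: T.
Proof.
rewrite /rtens {2}(matrix_sum_delta T) scaler_sumr; apply: eq_bigr => mu _.
rewrite scaler_sumr; apply: eq_bigr => nu _.
rewrite /rmul RactC mul_mx_scalar -tens_balanced /rmul RactC mul_mx_scalar.
by rewrite tensZl tens_dx scalerA mulrC -scalerA.
Qed.

Lemma rtensM T a b : rtens V T (a * b) = rtens V (rtens V T a) b.
Proof.
move: T; apply: linear_mx_ext => [X Y | c X | X Y | c X | mu nu].
- exact: rtensDl.
- exact: rtensZl.
- by rewrite !rtensDl.
- by rewrite !rtensZl.
by rewrite -tens_dx !rtens_tens /rmul RactM -mulmxE mulmxA.
Qed.

Lemma rtens_genE T rho : rtens V T (gen rho) = gen rho *: T + twist V rho T.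
Proof.
rewrite rtens_gen /Rgen [(_ + _)^T]raddfD /= tr_scalar_mx mulmxDl mul_scalar_mx.
by rewrite addrA.
Qed.

Lemma twistD rho T U : twist V rho (T + U) = twist V rho T + twist V rho U.
Proof. by rewrite /twist mulmxDr mulmxDl addrACA. Qed.

Lemma twistZ rho (c : A) T : twist V rho (c *: T) = c *: twist V rho T.
Proof. by rewrite /twist -scalemxAr -scalemxAl scalerDr. Qed.

Lemma twist_unit T : twist V i0 T = 0.
Proof. by rewrite /twist Nmx_unit trmx1 mul1mx mulmx1 addmx_pchar2 // pchar2_A. Qed.

Lemma tens0l eta : tens V 0 eta = 0.
Proof. by apply: (additive0 (f := tens V ^~ eta)) => w1 w2; rewrite tensDl. Qed.

Lemma theta_Nmx : theta *m Nmx V i1 = dx i1.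
Proof.
apply/rowP => l; rewrite !mxE /theta.
under eq_bigr do rewrite !mxE.
rewrite (bigD1 i0) //= big1 ?addr0 => [|j /negbTE nj]; last by rewrite nj mul0r.
by rewrite mul1r /unital_alg /= cA_is_nat; case: (ord2P l) => ->.
Qed.

Lemma poly2_expansion (a : A) :
  a = \sum_(i < size a) \sum_(j < size a`_i) cA (a`_i)`_j * (evar ^+ j * xvar ^+ i).
Proof.
have coef_expansion (R : nzRingType) (p : {poly R}) :
    p = \sum_(j < size p) p`_j *: 'X^j.
  by rewrite -{1}[p]coefK poly_def.
rewrite {1}(coef_expansion _ a); apply: eq_bigr => i _.
rewrite -mul_polyC {1}(coef_expansion _ a`_i) rmorph_sum /= mulr_suml.
apply: eq_bigr => j _.
by rewrite -mul_polyC rmorphM /= rmorphXn /= /cA /evar /xvar mulrA.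
Qed.

Lemma dA_monomial (i j : nat) :
  \sum_(k < j) (evar ^+ k *: rmul V (dx i0) (evar ^+ (j - k.+1) * xvar ^+ i))
  + \sum_(k < i) ((evar ^+ j * xvar ^+ k) *: rmul V (dx i1) (xvar ^+ (i - k.+1)))
  = theta *m ((Rgen V i0 ^+ j) *m (Rgen V i1 ^+ i)) + (evar ^+ j * xvar ^+ i) *: theta.
Proof.
have de_part :
    \sum_(k < j) (evar ^+ k *: rmul V (dx i0) (evar ^+ (j - k.+1) * xvar ^+ i))
    = ((evar + 1) ^+ j - evar ^+ j) *: (theta *m Rgen V i1 ^+ i).
  have geometric : \sum_(k < j) evar ^+ k * (evar + 1) ^+ (j - k.+1)
      = (evar + 1) ^+ j - evar ^+ j.
    rewrite subrXX (addrC evar 1) addrK mul1r; apply: eq_bigr => k _.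
    by rewrite mulrC subnS predn_sub addrC.
  rewrite -geometric scaler_suml; apply: eq_bigr => k _.
  rewrite /rmul RactM !RactX Ract_evar Ract_xvar -scalerA; congr (_ *: _).
  by rewrite -rmorphXn /= -mulmxE mulmxA mul_mx_scalar -scalemxAl.
have dx_part :
    \sum_(k < i) ((evar ^+ j * xvar ^+ k) *: rmul V (dx i1) (xvar ^+ (i - k.+1)))
    = evar ^+ j *: (theta *m (Rgen V i1 ^+ i - (xvar%:M) ^+ i)).
  have Rgen_sub : Rgen V i1 - xvar%:M = Nmx V i1 by rewrite /Rgen /gen /= addrAC subrr add0r.
  rewrite (subrXX_comm _ (scalar_mxC _ _)) Rgen_sub -mulmxE mulmxA theta_Nmx.
  rewrite mulmx_sumr scaler_sumr; apply: eq_bigr => k _.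
  rewrite /rmul RactX Ract_xvar -scalerA; congr (_ *: _).
  by rewrite -rmorphXn /= mul_mx_scalar -scalemxAr subnS predn_sub.
rewrite de_part dx_part Rgen_unit -[(evar + 1)%:M ^+ j]rmorphXn /= mulmxA mul_mx_scalar.
rewrite -scalemxAl -[xvar%:M ^+ i]rmorphXn /= mulmxBr mul_mx_scalar scalerBl scalerBr.
by rewrite scalerA addrA subrK (oppmx_pchar2 pchar2_A).
Qed.

Lemma dA_inner a : dA V a = rmul V theta a + a *: theta.
Proof.
have a_theta : a *: theta = \sum_(i < size a) \sum_(j < size a`_i)
    cA (a`_i)`_j *: ((evar ^+ j * xvar ^+ i) *: theta).
  rewrite {1}(poly2_expansion a) scaler_suml; apply: eq_bigr => i _.
  by rewrite scaler_suml; apply: eq_bigr => j _; rewrite scalerA.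
rewrite a_theta /dA /rmul /Ract mulmx_sumr -big_split; apply: eq_bigr => i _.
rewrite mulmx_sumr -big_split; apply: eq_bigr => j _.
rewrite dA_monomial scalerDr; congr (_ + _).
by rewrite -!mulmxA mul_scalar_mx scalemxAr.
Qed.

Lemma dA_cA c : dA V (cA c) = 0.
Proof. by rewrite dA_inner /rmul RactC mul_mx_scalar addmx_pchar2 // pchar2_A. Qed.

Lemma dA_gen rho : dA V (gen rho) = dx rho.
Proof.
rewrite dA_inner /rmul Ract_gen; case: (ord2P rho) => -> /=.
  rewrite Rgen_unit mul_mx_scalar scalerDl scale1r /gen /= addrAC.
  by rewrite addmx_pchar2 ?add0r // pchar2_A.
rewrite /Rgen /gen /= mulmxDr mul_mx_scalar theta_Nmx addrC addrA.
by rewrite addmx_pchar2 ?add0r // pchar2_A.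
Qed.

End Calculus.

Section ConstantConnection.
Variables c0 c1 : 'F_2.
Local Notation V := (unital_alg c0 c1).

Definition struct_mx (b : 'I_2) : 'M['F_2]_2 := \matrix_(mu, rho) V mu b rho.

Lemma lift_struct_mx b : liftmx (struct_mx b) = Nmx V b.
Proof. by apply/matrixP => i j; rewrite !mxE. Qed.

Lemma struct_mx_unit : struct_mx i0 = 1%:M.
Proof. by apply: liftmx_inj; rewrite lift_struct_mx Nmx_unit liftmx_map map_scalar_mx rmorph1. Qed.

(* the matrix of [sigma (dx^mu (x) theta) = nabla dx^mu - theta (x) dx^mu] *)
Definition sigma_theta (G : 'M['F_2]_2 * 'M['F_2]_2) mu : 'M['F_2]_2 :=
  Gam G mu + delta_mx i0 mu.

(* [sigma (dx^a (x) dx^b)], as forced by the right Leibniz rule for [dx^a . x^b] *)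
Definition sigma_gen G (a b : 'I_2) : 'M['F_2]_2 :=
  (struct_mx b)^T *m sigma_theta G a + sigma_theta G a *m struct_mx b
  + \sum_mu struct_mx b a mu *: sigma_theta G mu.

Definition sigmaF G (M : 'M['F_2]_2) : 'M['F_2]_2 :=
  \sum_a \sum_b M a b *: sigma_gen G a b.

Definition sigmaA G (T : 'M[A]_2) : 'M[A]_2 :=
  \sum_a \sum_b T a b *: liftmx (sigma_gen G a b).

Lemma sigmaA_lift G M : sigmaA G (liftmx M) = liftmx (sigmaF G M).
Proof.
rewrite /sigmaA /sigmaF liftmx_sum; apply: eq_bigr => a _.
by rewrite liftmx_sum; apply: eq_bigr => b _; rewrite liftmxZ mxE.
Qed.

Lemma sigmaAD G T U : sigmaA G (T + U) = sigmaA G T + sigmaA G U.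
Proof.
rewrite /sigmaA -big_split; apply: eq_bigr => a _.
by rewrite -big_split; apply: eq_bigr => b _; rewrite mxE scalerDl.
Qed.

Lemma sigmaAZ G (c : A) T : sigmaA G (c *: T) = c *: sigmaA G T.
Proof.
rewrite /sigmaA scaler_sumr; apply: eq_bigr => a _.
by rewrite scaler_sumr; apply: eq_bigr => b _; rewrite mxE scalerA.
Qed.

Lemma sigmaA_delta G a b : sigmaA G (delta_mx a b) = liftmx (sigma_gen G a b).
Proof. exact: sum_delta_mxZ. Qed.

Lemma sigma_gen_theta G mu : sigma_gen G mu i0 = sigma_theta G mu.
Proof.
rewrite /sigma_gen struct_mx_unit trmx1 mul1mx mulmx1 addmx_pchar2 ?pchar2_F2 //.
by rewrite add0r sum_scalar_mxZ scale1r.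
Qed.

Lemma lift_sigma_gen G a b : liftmx (sigma_gen G a b) =
  (Nmx V b)^T *m liftmx (sigma_theta G a) + liftmx (sigma_theta G a) *m Nmx V b
  + \sum_mu Nmx V b a mu *: liftmx (sigma_theta G mu).
Proof.
rewrite /sigma_gen; move: (sigma_theta G) => K.
rewrite !liftmxD !liftmxM liftmx_tr lift_struct_mx liftmx_sum.
by under eq_bigr do rewrite liftmxZ -[cA _](liftmxE (struct_mx b)) lift_struct_mx.
Qed.

Lemma nabla_theta_decomp nabla sigma G :
  bimod_conn V nabla sigma -> const_coeff nabla G ->
  forall w, nabla w = tens V theta w + \sum_mu w 0 mu *: liftmx (sigma_theta G mu).
Proof.
move=> [nablaD nablaZ _ _] nablaG w.
rewrite {1}(row_sum_dx w) (additive_sum nablaD) [w in tens _ theta w]row_sum_dx.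
rewrite (additive_sum (tensDr _ _ theta)) -big_split; apply: eq_bigr => mu _.
rewrite nablaZ nablaG dA_inner tensDl tens_balanced tensZl tens_dx.
by rewrite /sigma_theta liftmxD liftmx_delta scalerDr addrCA.
Qed.

Lemma sigma_delta nabla sigma G : bimod_conn V nabla sigma -> const_coeff nabla G ->
  forall a b, sigma (delta_mx a b) = liftmx (sigma_gen G a b).
Proof.
move=> nablaB nablaG a b; have [_ _ nablaR _] := nablaB.
have := nablaR (dx a) (gen b); rewrite dA_gen tens_dx => leibniz.
have -> : sigma (delta_mx a b) =
    nabla (rmul V (dx a) (gen b)) + rtens V (nabla (dx a)) (gen b).
  by rewrite leibniz addrAC addmx_pchar2 ?add0r // pchar2_A.
rewrite (nabla_theta_decomp nablaB nablaG) nablaG -rtens_tens tens_dx addrAC -rtensDl.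
have -> : delta_mx i0 a + liftmx (Gam G a) = liftmx (sigma_theta G a).
  by rewrite /sigma_theta liftmxD liftmx_delta addrC.
rewrite rtens_genE lift_sigma_gen.
under eq_bigr do rewrite rmul_dx Ract_gen mxE /Rgen mxE scalerDl.
rewrite big_split /= sum_scalar_mxZ addrACA addmx_pchar2 ?add0r //.
exact: pchar2_A.
Qed.

Lemma sigma_determined nabla sigma G : bimod_conn V nabla sigma -> const_coeff nabla G ->
  forall T, sigma T = sigmaA G T.
Proof.
move=> nablaB nablaG; have [_ _ _ [sigmaD sigmaZ _]] := nablaB.
apply: linear_mx_ext => // [||a b]; [exact: sigmaAD | exact: sigmaAZ |].
by rewrite sigmaA_delta (sigma_delta nablaB nablaG).
Qed.

Lemma torsion_freeE nabla sigma G : bimod_conn V nabla sigma -> const_coeff nabla G ->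
  torsion_free V nabla <-> forall mu, Gam G mu i0 i1 = Gam G mu i1 i0.
Proof.
move=> nablaB nablaG; split => [torsion mu | Gam_sym w].
  have := torsion (dx mu); rewrite nablaG wedge_lift /dd.
  under eq_bigr do rewrite mxE -cA_is_nat dA_cA tens0l (additive0 wedgeD).
  by rewrite big1 // -cA0 => /cA_inj /eqP; rewrite F2_addr_eq0 => /eqP.
rewrite (nabla_theta_decomp nablaB nablaG) /dd wedgeD [w in tens _ theta w]row_sum_dx.
rewrite (additive_sum (tensDr _ _ theta)) !(additive_sum wedgeD) -big_split.
apply: eq_bigr => mu _.
rewrite dA_inner tensDl tens_balanced tensZl tens_dx !wedgeZ /sigma_theta liftmxD.
rewrite liftmx_delta wedgeD wedge_lift Gam_sym addrr_pchar2 ?pchar2_F2 // cA0 add0r.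
by rewrite wedgeD wedgeZ.
Qed.

Definition slice_dx_tens (mu : 'I_2) (M : 'M['F_2]_2) (b : 'I_2) : 'M['F_2]_2 :=
  \matrix_(p, a) ((p == mu)%:R * M a b).

Definition metric_defect G (g : 'M['F_2]_2) (b : 'I_2) : 'M['F_2]_2 :=
  \sum_mu \sum_nu g mu nu *:
     ((if b == nu then Gam G mu else 0) + sigmaF G (slice_dx_tens mu (Gam G nu) b)).

Lemma tens3l_lift mu M b : tens3l V (dx mu) (liftmx M) b = liftmx (slice_dx_tens mu M b).
Proof.
apply/matrixP => p a; rewrite /tens3l mxE rmul_dx liftmxE RactC !mxE eq_sym.
by case: (p == mu); rewrite ?mulr1n ?mulr0n ?mul1r ?mul0r ?cA0.
Qed.

Lemma tens3r_lift M nu b : tens3r (liftmx M) nu b = liftmx (if b == nu then M else 0).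
Proof. by rewrite /tens3r; case: (b == nu); rewrite ?liftmx0. Qed.

Lemma metric_compatibleE nabla sigma G g :
  const_coeff nabla G -> (forall T, sigma T = sigmaA G T) ->
  metric_compatible V g nabla sigma <-> forall b, metric_defect G g b = 0.
Proof.
move=> nablaG sigmaG.
have defectE b : \sum_mu \sum_nu (cA (g mu nu) *: (tens3r (nabla (dx mu)) nu b
      + sigma (tens3l V (dx mu) (nabla (dx nu)) b))) = liftmx (metric_defect G g b).
  rewrite /metric_defect liftmx_sum; apply: eq_bigr => mu _.
  rewrite liftmx_sum; apply: eq_bigr => nu _.
  by rewrite !nablaG sigmaG tens3l_lift tens3r_lift sigmaA_lift liftmxZ liftmxD.
split => compat b; have := compat b; rewrite defectE.
  by rewrite -liftmx0 => /liftmx_inj.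
by move=> ->; rewrite liftmx0.
Qed.

Definition twistF (M : 'M['F_2]_2) : 'M['F_2]_2 :=
  (struct_mx i1)^T *m M + M *m struct_mx i1.

Lemma lift_twistF M : liftmx (twistF M) = twist V i1 (liftmx M).
Proof. by rewrite liftmxD !liftmxM liftmx_tr lift_struct_mx. Qed.

Definition sigmaF_twist_comm G :=
  forall a b, sigmaF G (twistF (delta_mx a b)) = twistF (sigma_gen G a b).

Lemma sigmaA_twist G : sigmaF_twist_comm G ->
  forall T, sigmaA G (twist V i1 T) = twist V i1 (sigmaA G T).
Proof.
move=> sigma_twist; apply: linear_mx_ext => [X Y | c X | X Y | c X | a b].
- by rewrite twistD sigmaAD.
- by rewrite twistZ sigmaAZ.
- by rewrite sigmaAD twistD.
- by rewrite sigmaAZ twistZ.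
by rewrite sigmaA_delta -lift_twistF -liftmx_delta -lift_twistF sigmaA_lift sigma_twist.
Qed.

Lemma sigmaA_rtens G : sigmaF_twist_comm G ->
  forall a T, sigmaA G (rtens V T a) = rtens V (sigmaA G T) a.
Proof.
move=> sigma_twist.
pose commutes a := forall T, sigmaA G (rtens V T a) = rtens V (sigmaA G T) a.
have commutesC c : commutes (cA c) by move=> T; rewrite !rtensC sigmaAZ.
have commutesD a b : commutes a -> commutes b -> commutes (a + b).
  by move=> Ha Hb T; rewrite !rtensDr sigmaAD Ha Hb.
have commutesM a b : commutes a -> commutes b -> commutes (a * b).
  by move=> Ha Hb T; rewrite !rtensM Hb Ha.
have commutes_gen rho : commutes (gen rho).
  move=> T; rewrite !rtens_genE sigmaAD sigmaAZ; congr (_ + _).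
  case: (ord2P rho) => ->; last exact: sigmaA_twist.
  by rewrite !twist_unit (additive0 (sigmaAD G)).
have commutes_polyC (c : {poly 'F_2}) : commutes c%:P.
  elim/poly_ind: c => [|q k IHq]; first by rewrite polyC0 -cA0; apply: commutesC.
  rewrite polyCD polyCM; apply: commutesD; last exact: commutesC.
  by apply: commutesM; [exact: IHq | exact: commutes_gen i0].
elim/poly_ind => [|p c IHp]; first by rewrite -cA0; apply: commutesC.
apply: commutesD; last exact: commutes_polyC.
by apply: commutesM; [exact: IHp | exact: commutes_gen i1].
Qed.

Definition sigmaF_involutive G := forall a b, sigmaF G (sigma_gen G a b) = delta_mx a b.

Lemma sigmaA_involutive G : sigmaF_involutive G -> involutive (sigmaA G).
Proof.
move=> sigma2; apply: linear_mx_ext => [X Y | c X | // | // | a b].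
- by rewrite !sigmaAD.
- by rewrite !sigmaAZ.
by rewrite sigmaA_delta sigmaA_lift sigma2 liftmx_delta.
Qed.

Definition nabla_of G (w : 'rV[A]_2) : 'M[A]_2 :=
  tens V theta w + sigmaA G (tens V w theta).

Lemma nabla_of_bimod G : sigmaF_twist_comm G -> bimod_conn V (nabla_of G) (sigmaA G).
Proof.
move=> sigma_twist; have pchar2 := pchar2_A.
split.
- by move=> w eta; rewrite /nabla_of tensDr tensDl sigmaAD addrACA.
- move=> a w; rewrite /nabla_of -tens_balanced tensZl sigmaAZ dA_inner tensDl tensZl.
  by rewrite scalerDr [RHS]addrC -addrA addmx_pchar2K.
- move=> w a; rewrite /nabla_of rtensDl rtens_tens -sigmaA_rtens // rtens_tens.
  rewrite dA_inner tensDr sigmaAD tens_balanced -addrA; congr (_ + _).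
  by rewrite addmx_pchar2K.
- split; [exact: sigmaAD | exact: sigmaAZ | by move=> T a; rewrite sigmaA_rtens].
Qed.

Lemma nabla_of_const G : const_coeff (nabla_of G) G.
Proof.
move=> mu; rewrite /nabla_of /theta !tens_dx sigmaA_delta sigma_gen_theta.
rewrite /sigma_theta liftmxD liftmx_delta addrCA addmx_pchar2 ?addr0 //.
exact: pchar2_A.
Qed.

Lemma QLC_of_const_eqs G g :
  sigmaF_twist_comm G -> sigmaF_involutive G ->
  (forall mu, Gam G mu i0 i1 = Gam G mu i1 i0) -> (forall b, metric_defect G g b = 0) ->
  exists nabla sigma, is_QLC V g nabla sigma /\ const_coeff nabla G.
Proof.
move=> sigma_twist sigma2 Gam_sym defect0.
have nablaB := nabla_of_bimod sigma_twist; have nablaG := @nabla_of_const G.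
exists (nabla_of G), (sigmaA G); split => //; split => //.
- exact: inv_bij (sigmaA_involutive sigma2).
- exact/(torsion_freeE nablaB nablaG).
- exact/(metric_compatibleE g nablaG (fun T => erefl)).
Qed.

Lemma QLC_const_eqs nabla sigma G g :
  is_QLC V g nabla sigma -> const_coeff nabla G ->
  (forall mu, Gam G mu i0 i1 = Gam G mu i1 i0) /\ (forall b, metric_defect G g b = 0).
Proof.
move=> [nablaB _ torsion compat] nablaG; split.
  exact/(torsion_freeE nablaB nablaG).
exact/(metric_compatibleE g nablaG (sigma_determined nablaB nablaG)).
Qed.

Lemma QLC_alpha0 nabla sigma G g : is_QLC V g nabla sigma -> const_coeff nabla G ->
  forall w, nabla w - (tens V theta w - sigma (tens V w theta)) = 0.
Proof.
move=> [nablaB _ _ _] nablaG w.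
have -> : sigma (tens V w theta) = \sum_mu w 0 mu *: liftmx (sigma_theta G mu).
  rewrite (sigma_determined nablaB nablaG) {1}(row_sum_dx w).
  rewrite (additive_sum (fun x y => tensDl c0 c1 x y theta)) (additive_sum (sigmaAD G)).
  apply: eq_bigr => mu _.
  by rewrite tensZl sigmaAZ /theta tens_dx sigmaA_delta sigma_gen_theta.
rewrite (nabla_theta_decomp nablaB nablaG) !(oppmx_pchar2 pchar2_A).
by rewrite addmx_pchar2 // pchar2_A.
Qed.

Lemma is_qmetricE g : is_qmetric V g <-> [/\ g^T = g, g \in unitmx & twistF g = 0].
Proof.
have centralE T rho : gen rho *: T = rtens V T (gen rho) <-> twist V rho T = 0.
  rewrite rtens_genE; split => [/esym/eqP | ->]; last by rewrite addr0.
  by rewrite -subr_eq0 addrAC subrr add0r => /eqP.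
split => [[g_sym g_unit central] | [g_sym g_unit central]]; split => //.
  by apply: liftmx_inj; rewrite lift_twistF liftmx0; apply/centralE.
move=> rho; apply/centralE; case: (ord2P rho) => ->.
  exact: twist_unit.
by rewrite -lift_twistF central liftmx0.
Qed.

End ConstantConnection.

Definition F2b (b : bool) : 'F_2 := if b then 1 else 0.

Lemma F2bD a b : F2b (a (+) b) = F2b a + F2b b.
Proof. by case: a; case: b; rewrite /= ?addr0 ?add0r // addrr_pchar2 // pchar2_F2. Qed.

Lemma F2bM a b : F2b (a && b) = F2b a * F2b b.
Proof. by case: a; case: b; rewrite /= ?mulr1 ?mulr0. Qed.

Lemma F2b_surj (z : 'F_2) : exists b, z = F2b b.
Proof. by case: (F2P z) => ->; [exists false | exists true]. Qed.

Lemma F2b_inj : injective F2b.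
Proof. by case; case => //= /eqP; rewrite ?oner_eq0 // eq_sym oner_eq0. Qed.

Lemma F2b_neq0 b : (F2b b != 0) = b.
Proof. by case: b; rewrite /= ?oner_neq0 ?eqxx. Qed.

(* Row-major bit quadruples encode 2x2 matrices over F_2; unlike the locked
   matrices they compute under [vm_compute]. *)
Definition quad := (bool * bool * bool * bool)%type.

Definition mxq (x : quad) : 'M['F_2]_2 :=
  let: (a, b, c, d) := x in mx2 (F2b a) (F2b b) (F2b c) (F2b d).

Definition ordb (i : bool) : 'I_2 := if i then i1 else i0.

Definition qentry (x : quad) (i j : bool) : bool :=
  let: (a, b, c, d) := x in if i then (if j then d else c) else (if j then b else a).

Definition qadd (x y : quad) : quad :=
  let: (a, b, c, d) := x in let: (a', b', c', d') := y in
  (a (+) a', b (+) b', c (+) c', d (+) d').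

Definition qmul (x y : quad) : quad :=
  let: (a, b, c, d) := x in let: (e, f, g, h) := y in
  ((a && e) (+) (b && g), (a && f) (+) (b && h), (c && e) (+) (d && g), (c && f) (+) (d && h)).

Definition qtr (x : quad) : quad := let: (a, b, c, d) := x in (a, c, b, d).

Definition qscale (s : bool) (x : quad) : quad :=
  let: (a, b, c, d) := x in (s && a, s && b, s && c, s && d).

Definition q0 : quad := (false, false, false, false).

Definition qdelta (i j : bool) : quad := (~~ i && ~~ j, ~~ i && j, i && ~~ j, i && j).

Definition qdet (x : quad) : bool := let: (a, b, c, d) := x in (a && d) (+) (b && c).

Lemma ordbP (i : 'I_2) : i = ordb false \/ i = ordb true.
Proof. exact: ord2P. Qed.

Lemma mxqE x i j : mxq x (ordb i) (ordb j) = F2b (qentry x i j).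
Proof. by case: x => [[[a b] c] d]; case: i; case: j; rewrite /mxq mxE. Qed.

Lemma eq_mxq (M : 'M['F_2]_2) x :
  (forall i j, M (ordb i) (ordb j) = F2b (qentry x i j)) -> M = mxq x.
Proof.
move=> Mx; apply/matrixP => i j.
by case: (ordbP i) => ->; case: (ordbP j) => ->; rewrite mxqE Mx.
Qed.

Lemma mxq_surj (M : 'M['F_2]_2) : exists x, M = mxq x.
Proof.
have [a Ma] := F2b_surj (M (ordb false) (ordb false)).
have [b Mb] := F2b_surj (M (ordb false) (ordb true)).
have [c Mc] := F2b_surj (M (ordb true) (ordb false)).
have [d Md] := F2b_surj (M (ordb true) (ordb true)).
by exists (a, b, c, d); apply: eq_mxq => - [] [].
Qed.

Lemma mxq_inj : injective mxq.
Proof.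
move=> x y xy; have qentry_eq i j : qentry x i j = qentry y i j.
  by apply: F2b_inj; rewrite -!mxqE xy.
move: qentry_eq {xy}; case: x => [[[a b] c] d]; case: y => [[[a' b'] c'] d'] qentry_eq.
move: (qentry_eq false false) (qentry_eq false true) (qentry_eq true false).
by move: (qentry_eq true true) => /= -> -> -> ->.
Qed.

Lemma mxq0 : mxq q0 = 0.
Proof. by apply/esym/eq_mxq => - [] []; rewrite mxE. Qed.

Lemma mxqD x y : mxq (qadd x y) = mxq x + mxq y.
Proof.
apply/esym/eq_mxq => i j; rewrite mxE !mxqE.
by case: x => [[[a b] c] d]; case: y => [[[a' b'] c'] d']; case: i; case: j; rewrite /= F2bD.
Qed.

Lemma mxqM x y : mxq (qmul x y) = mxq x *m mxq y.
Proof.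
apply/esym/eq_mxq => i j; rewrite mxE !big_ord_recl big_ord0 addr0.
have -> : lift ord0 ord0 = ordb true :> 'I_2 by apply: val_inj.
rewrite -[ord0]/(ordb false) !mxqE.
case: x => [[[a b] c] d]; case: y => [[[a' b'] c'] d'].
by case: i; case: j; rewrite /= F2bD !F2bM.
Qed.

Lemma mxq_tr x : mxq (qtr x) = (mxq x)^T.
Proof.
apply/esym/eq_mxq => i j; rewrite mxE !mxqE.
by case: x => [[[a b] c] d]; case: i; case: j.
Qed.

Lemma mxqZ s x : mxq (qscale s x) = F2b s *: mxq x.
Proof.
apply/esym/eq_mxq => i j; rewrite mxE !mxqE.
by case: x => [[[a b] c] d]; case: i; case: j; rewrite /= F2bM.
Qed.

Lemma mxq_delta i j : mxq (qdelta i j) = delta_mx (ordb i) (ordb j).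
Proof. by apply/esym/eq_mxq => k l; rewrite mxE; case: i; case: j; case: k; case: l. Qed.

Lemma mxq_lin4 a b c d X Y Z W :
  mxq (qadd (qadd (qscale a X) (qscale b Y)) (qadd (qscale c Z) (qscale d W))) =
  F2b a *: mxq X + F2b b *: mxq Y + (F2b c *: mxq Z + F2b d *: mxq W).
Proof. by rewrite !mxqD !mxqZ. Qed.

Lemma mxq_det x : \det (mxq x) = F2b (qdet x).
Proof.
case: x => [[[a b] c] d]; rewrite (expand_det_row _ (ordb false)) !big_ord_recl big_ord0.
rewrite /cofactor !det_mx11 !mxE /= !expr0 !expr1 !mul1r !mulN1r F2bD !F2bM.
by rewrite mulrN oppr_pchar2 ?pchar2_F2 // addr0.
Qed.

Definition quads : seq quad :=
  [seq (ab, cd.1, cd.2) | ab <- [seq (a, b) | a <- [:: false; true], b <- [:: false; true]],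
                          cd <- [seq (c, d) | c <- [:: false; true], d <- [:: false; true]]].

Lemma mem_quads x : x \in quads.
Proof. by case: x => [[[[] []] []] []]. Qed.

Definition all_bool2 (P : bool -> bool -> bool) :=
  [&& P false false, P false true, P true false & P true true].

Lemma all_bool2P P : all_bool2 P -> forall i j, P i j.
Proof. by case/and4P => ? ? ? ? [] []. Qed.

Section FiniteCheck.
Variables b0 b1 : bool.
Local Notation c0 := (F2b b0).
Local Notation c1 := (F2b b1).
Local Notation V := (unital_alg c0 c1).

Definition struct_q (b : bool) : quad :=
  if b then (false, true, b0, b1) else (true, false, false, true).

Lemma mxq_struct b : struct_mx c0 c1 (ordb b) = mxq (struct_q b).
Proof. by apply: eq_mxq => i j; rewrite mxE /unital_alg; case: b; case: i; case: j. Qed.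

Definition Gam_q (x y : quad) (mu : bool) : quad := if mu then y else x.

Lemma mxq_Gam x y mu : Gam (mxq x, mxq y) (ordb mu) = mxq (Gam_q x y mu).
Proof. by case: mu. Qed.

Definition sigma_theta_q x y mu : quad := qadd (Gam_q x y mu) (qdelta false mu).

Lemma mxq_sigma_theta x y mu :
  sigma_theta (mxq x, mxq y) (ordb mu) = mxq (sigma_theta_q x y mu).
Proof. by rewrite /sigma_theta mxq_Gam mxqD mxq_delta. Qed.

Definition sigma_gen_q x y (a b : bool) : quad :=
  let N := struct_q b in
  qadd (qadd (qmul (qtr N) (sigma_theta_q x y a)) (qmul (sigma_theta_q x y a) N))
       (qadd (qscale (qentry N a false) (sigma_theta_q x y false))
             (qscale (qentry N a true) (sigma_theta_q x y true))).

Lemma sum_ordb (X : nmodType) (F : 'I_2 -> X) : \sum_i F i = F (ordb false) + F (ordb true).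
Proof.
by rewrite !big_ord_recl big_ord0 addr0; congr (_ + F _); apply: val_inj.
Qed.

Lemma mxq_sigma_gen x y a b :
  sigma_gen c0 c1 (mxq x, mxq y) (ordb a) (ordb b) = mxq (sigma_gen_q x y a b).
Proof.
rewrite /sigma_gen /sigma_gen_q sum_ordb !mxq_sigma_theta !mxq_struct !mxqE.
by rewrite !mxqD !mxqM !mxq_tr !mxqZ /sigma_theta_q !mxqD.
Qed.

Definition twist_q (M : quad) : quad :=
  let N := struct_q true in qadd (qmul (qtr N) M) (qmul M N).

Lemma mxq_twist M : twistF c0 c1 (mxq M) = mxq (twist_q M).
Proof. by rewrite /twistF -[i1]/(ordb true) mxq_struct -!mxq_tr -!mxqM -mxqD. Qed.

Definition sigmaF_q x y (M : quad) : quad :=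
  qadd (qadd (qscale (qentry M false false) (sigma_gen_q x y false false))
             (qscale (qentry M false true) (sigma_gen_q x y false true)))
       (qadd (qscale (qentry M true false) (sigma_gen_q x y true false))
             (qscale (qentry M true true) (sigma_gen_q x y true true))).

Lemma mxq_sigmaF x y M : sigmaF c0 c1 (mxq x, mxq y) (mxq M) = mxq (sigmaF_q x y M).
Proof.
by rewrite /sigmaF /sigmaF_q !sum_ordb !mxqE !mxq_sigma_gen mxq_lin4.
Qed.

Definition slice_q (mu : bool) (M : quad) (b : bool) : quad :=
  (~~ mu && qentry M false b, ~~ mu && qentry M true b,
   mu && qentry M false b, mu && qentry M true b).

Lemma mxq_slice mu M b : slice_dx_tens (ordb mu) (mxq M) (ordb b) = mxq (slice_q mu M b).
Proof.
apply: eq_mxq => i j; rewrite mxE mxqE.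
by case: mu; case: i; case: j; rewrite /= ?mul1r ?mul0r.
Qed.

Definition metric_defect_q x y (g : quad) (b : bool) : quad :=
  let term mu nu := qscale (qentry g mu nu)
    (qadd (if b == nu then Gam_q x y mu else q0) (sigmaF_q x y (slice_q mu (Gam_q x y nu) b))) in
  qadd (qadd (term false false) (term false true)) (qadd (term true false) (term true true)).

Lemma mxq_metric_defect x y g b :
  metric_defect c0 c1 (mxq x, mxq y) (mxq g) (ordb b) = mxq (metric_defect_q x y g b).
Proof.
rewrite /metric_defect /metric_defect_q !sum_ordb !mxqE !mxq_Gam !mxq_slice !mxq_sigmaF.
have ifE mu nu : (if ordb b == ordb nu then mxq (Gam_q x y mu) else 0)
    = mxq (if b == nu then Gam_q x y mu else q0).
  by case: b; case: nu; rewrite ?mxq0.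
by rewrite mxq_lin4 !ifE ![mxq (qadd (if _ then _ else _) _)]mxqD.
Qed.

Definition sym_q (x y : quad) :=
  (qentry x false true == qentry x true false) && (qentry y false true == qentry y true false).

Definition metric_q x y g :=
  (metric_defect_q x y g false == q0) && (metric_defect_q x y g true == q0).

Definition twist_comm_q x y := all_bool2 (fun a b =>
  sigmaF_q x y (twist_q (qdelta a b)) == twist_q (sigma_gen_q x y a b)).

Definition involutive_q x y :=
  all_bool2 (fun a b => sigmaF_q x y (sigma_gen_q x y a b) == qdelta a b).

Definition flip_q := all_bool2 (fun a b => sigma_gen_q q0 q0 a b == qdelta b a).

Definition qmetric_q (x : quad) :=
  [&& qtr x == x, qdet x & twist_q x == q0].

Lemma QLC_const_eqs_q g x y nabla sigma :
  is_QLC V (mxq g) nabla sigma -> const_coeff nabla (mxq x, mxq y) ->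
  sym_q x y && metric_q x y g.
Proof.
move=> nablaQ nablaG; have [Gam_sym defect0] := QLC_const_eqs nablaQ nablaG.
apply/andP; split; apply/andP; split; apply/eqP.
- by have := Gam_sym i0; rewrite -[i0]/(ordb false) -[i1]/(ordb true) mxq_Gam !mxqE => /F2b_inj.
- by have := Gam_sym i1; rewrite -[i0]/(ordb false) -[i1]/(ordb true) mxq_Gam !mxqE => /F2b_inj.
- by apply: mxq_inj; rewrite -mxq_metric_defect mxq0 defect0.
- by apply: mxq_inj; rewrite -mxq_metric_defect mxq0 defect0.
Qed.

Lemma QLC_of_const_eqs_q g x y :
  [&& twist_comm_q x y, involutive_q x y, sym_q x y & metric_q x y g] ->
  exists nabla sigma, is_QLC V (mxq g) nabla sigma /\ const_coeff nabla (mxq x, mxq y).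
Proof.
case/and4P => /all_bool2P sigma_twist /all_bool2P sigma2 /andP[/eqP x_sym /eqP y_sym].
case/andP => /eqP defect0 /eqP defect1.
apply: QLC_of_const_eqs => [a b | a b | mu | b].
- case: (ordbP a) => ->; case: (ordbP b) => ->;
  by rewrite -mxq_delta !mxq_twist mxq_sigma_gen mxq_sigmaF (eqP (sigma_twist _ _)) mxq_twist.
- case: (ordbP a) => ->; case: (ordbP b) => ->;
  by rewrite !mxq_sigma_gen mxq_sigmaF -mxq_delta (eqP (sigma2 _ _)).
- case: (ordbP mu) => ->;
  by rewrite mxq_Gam -[i0]/(ordb false) -[i1]/(ordb true) !mxqE /= ?x_sym ?y_sym.
- by case: (ordbP b) => ->; rewrite mxq_metric_defect ?defect0 ?defect1 mxq0.
Qed.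

Definition qlc_check g (L : seq (quad * quad)) :=
  [&& all (fun x => all (fun y => sym_q x y && metric_q x y g ==> ((x, y) \in L)) quads) quads,
      all (fun p => [&& twist_comm_q p.1 p.2, involutive_q p.1 p.2, sym_q p.1 p.2 &
                        metric_q p.1 p.2 g]) L &
      flip_q].

Lemma qlc_check_sound g L : qlc_check g L ->
  qlc_classification V (mxq g) [seq (mxq p.1, mxq p.2) | p <- L].
Proof.
case/and3P => /allP complete /allP sound /all_bool2P flip; split.
- move=> [G1 G2]; have [x ->] := mxq_surj G1; have [y ->] := mxq_surj G2; split.
    case=> nabla [sigma [nablaQ nablaG]]; apply/mapP; exists (x, y) => //.
    have /allP/(_ y (mem_quads y)) := complete x (mem_quads x).
    by move/implyP; apply; apply: QLC_const_eqs_q nablaQ nablaG.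
  case/mapP => [[x' y'] xyL [/mxq_inj -> /mxq_inj ->]].
  exact: QLC_of_const_eqs_q (sound _ xyL).
- by move=> G nabla sigma; apply: QLC_alpha0.
- move=> nabla sigma [nablaB _ _ _] nablaG mu nu; rewrite -mxq0 in nablaG.
  rewrite !tens_dx (sigma_delta nablaB nablaG).
  case: (ordbP mu) => ->; case: (ordbP nu) => ->;
  by rewrite mxq_sigma_gen (eqP (flip _ _)) mxq_delta liftmx_delta.
Qed.

Definition qmetric_check (L : seq quad) := all (fun x => qmetric_q x == (x \in L)) quads.

Lemma qmetric_check_sound L : qmetric_check L ->
  forall g, is_qmetric V g <-> g \in [seq mxq x | x <- L].
Proof.
move=> /allP check g; have [x ->] := mxq_surj g.
rewrite (mem_map mxq_inj) -(eqP (check x (mem_quads x))) is_qmetricE.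
rewrite unitmxE mxq_det unitfE F2b_neq0 -mxq_tr mxq_twist -mxq0.
rewrite /qmetric_q; split=> [[/mxq_inj -> -> /mxq_inj ->] | /and3P[/eqP -> -> /eqP ->]] //.
by rewrite !eqxx.
Qed.

End FiniteCheck.

(* Entry points taking ['F_2] data, so that the algebra and the metric are read off
   the goal. *)
Definition quadF := ('F_2 * 'F_2 * 'F_2 * 'F_2)%type.

Definition bool_of_F2 (z : 'F_2) : bool := z == 1.

Lemma bool_of_F2K z : F2b (bool_of_F2 z) = z.
Proof. by case: (F2P z) => ->. Qed.

Definition quad_of (x : quadF) : quad :=
  let: (a, b, c, d) := x in (bool_of_F2 a, bool_of_F2 b, bool_of_F2 c, bool_of_F2 d).

Definition mxF (x : quadF) : 'M['F_2]_2 := let: (a, b, c, d) := x in mx2 a b c d.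

Lemma mxq_quad_of x : mxq (quad_of x) = mxF x.
Proof. by case: x => [[[a b] c] d]; rewrite /= !bool_of_F2K. Qed.

Lemma mxF0 : mxF (0, 0, 0, 0) = 0.
Proof. by rewrite -mxq_quad_of -mxq0. Qed.

Lemma qmetric_classification_of_check (c0 c1 : 'F_2) (L : seq quadF) :
  qmetric_check (bool_of_F2 c0) (bool_of_F2 c1) (map quad_of L) ->
  forall g, is_qmetric (unital_alg c0 c1) g <-> g \in map mxF L.
Proof.
move/qmetric_check_sound; rewrite !bool_of_F2K -map_comp.
by under eq_map do rewrite /= mxq_quad_of.
Qed.

Lemma qlc_classification_of_check (c0 c1 a b c d : 'F_2) (L : seq (quadF * quadF)) :
  qlc_check (bool_of_F2 c0) (bool_of_F2 c1) (quad_of (a, b, c, d))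
            [seq (quad_of p.1, quad_of p.2) | p <- L] ->
  qlc_classification (unital_alg c0 c1) (mx2 a b c d) [seq (mxF p.1, mxF p.2) | p <- L].
Proof.
move/qlc_check_sound; rewrite !bool_of_F2K mxq_quad_of -map_comp.
by under eq_map do rewrite /= !mxq_quad_of.
Qed.

Theorem mainTheorem4 :
  (* quantum metrics *)
  (forall g, is_qmetric VA g <-> g \in [:: mx2 0 1 1 0; mx2 0 1 1 1]) /\
  (forall g, is_qmetric VB g <-> g \in [:: mx2 1 1 1 0]) /\
  (forall g, is_qmetric VC g <-> g \in [:: mx2 0 1 1 1; mx2 1 1 1 0; mx2 1 0 0 1]) /\
  (* QLCs with constant coefficients *)
  qlc_classification VA (mx2 0 1 1 0)
    [:: (0, 0);
        (mx2 0 0 0 1, 0);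
        (mx2 0 1 1 0, mx2 0 0 0 1);
        (mx2 0 1 1 1, mx2 0 0 0 1);
        (0, mx2 1 0 0 0);
        (mx2 0 1 1 0, mx2 1 0 0 1)] /\
  qlc_classification VA (mx2 0 1 1 1)
    [:: (0, 0);
        (mx2 0 0 0 1, 0);
        (mx2 0 1 1 0, mx2 0 0 0 1);
        (mx2 0 1 1 1, mx2 0 0 0 1)] /\
  qlc_classification VB (mx2 1 1 1 0)
    [:: (0, 0); (0, mx2 1 0 0 0)] /\
  qlc_classification VC (mx2 0 1 1 1)
    [:: (0, 0); (mx2 0 1 1 1, mx2 0 0 0 1)] /\
  qlc_classification VC (mx2 1 1 1 0)
    [:: (0, 0); (0, mx2 1 0 0 0)] /\
  qlc_classification VC (mx2 1 0 0 1)
    [:: (0, 0); (mx2 1 0 0 1, mx2 0 1 1 0)].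
Proof.
split; first by apply: (qmetric_classification_of_check (L := [:: (0,1,1,0); (0,1,1,1)])).
split; first by apply: (qmetric_classification_of_check (L := [:: (1,1,1,0)])).
split; first by apply: (qmetric_classification_of_check
  (L := [:: (0,1,1,1); (1,1,1,0); (1,0,0,1)])).
rewrite -!mxF0.
split; first by apply: (qlc_classification_of_check (L :=
  [:: ((0,0,0,0), (0,0,0,0)); ((0,0,0,1), (0,0,0,0)); ((0,1,1,0), (0,0,0,1));
      ((0,1,1,1), (0,0,0,1)); ((0,0,0,0), (1,0,0,0)); ((0,1,1,0), (1,0,0,1))])).
split; first by apply: (qlc_classification_of_check (L :=
  [:: ((0,0,0,0), (0,0,0,0)); ((0,0,0,1), (0,0,0,0)); ((0,1,1,0), (0,0,0,1));
      ((0,1,1,1), (0,0,0,1))])).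
split; first by apply: (qlc_classification_of_check
  (L := [:: ((0,0,0,0), (0,0,0,0)); ((0,0,0,0), (1,0,0,0))])).
split; first by apply: (qlc_classification_of_check
  (L := [:: ((0,0,0,0), (0,0,0,0)); ((0,1,1,1), (0,0,0,1))])).
split; first by apply: (qlc_classification_of_check
  (L := [:: ((0,0,0,0), (0,0,0,0)); ((0,0,0,0), (1,0,0,0))])).
by apply: (qlc_classification_of_check
  (L := [:: ((0,0,0,0), (0,0,0,0)); ((1,0,0,1), (0,1,1,0))])).
Qed.
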